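(* For real $0\le x<1$, $$\log\mathcal C_2\left(\frac x2\right)=\frac x2 \log(2\pi)+\log\sqrt\pi-\frac12\log\left(\cos\frac{\pi x}{2}\right)+\log\frac{G_{\mathrm B} \left(\frac12-\frac x{2}\right)}{G_{\mathrm B} \left(\frac32+\frac x2\right)}.$$
   Context: $G_{\mathrm B}$ denotes the Barnes $G$-function ($G_{\mathrm B}(z+1)=\Gamma(z)G_{\mathrm B}(z)$, $G_{\mathrm B}(1)=1$), positive on $(0,\infty)$. For real $|x|<\frac12$, $\mathcal C_2(x)=\prod_{n\ge1,\ n\text{ odd}}\left\{\left(\frac{1-\frac{x}{n/2}}{1+\frac{x}{n/2}}\right)^{n/2}e^{2x}\right\}$ (the double cosine function of Kurokawa–Koyama; a convergent positive product), and $\log$ is the real logarithm. *)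

From Stdlib Require Import Reals.
From Coquelicot Require Import Coquelicot.
Open Scope R_scope.

Fixpoint prod_1_to (f : nat -> R) (N : nat) : R :=
  match N with
  | O => 1
  | S n => prod_1_to f n * f (S n)
  end.

Definition euler_gamma : R :=
  real (Lim_seq (fun n => sum_f_R0 (fun k => / INR (S k)) n - ln (INR (S n)))).

(* Barnes G-function via its Weierstrass product:
   G(1+w) = (2 pi)^{w/2} exp(-(w + (1+gamma) w^2)/2)
            * prod_{k>=1} (1 + w/k)^k exp(-w + w^2/(2k)). *)
Definition barnes_factor (w : R) (k : nat) : R :=
  (1 + w / INR k) ^ k * exp (- w + w ^ 2 / (2 * INR k)).

Definition BarnesG (z : R) : R :=
  let w := z - 1 in
  Rpower (2 * PI) (w / 2) * exp (- (w + (1 + euler_gamma) * w ^ 2) / 2)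
  * real (Lim_seq (fun N => prod_1_to (barnes_factor w) N)).

(* Double cosine function C_2(x) = prod_{n odd} ((1 - x/(n/2))/(1 + x/(n/2)))^{n/2} e^{2x},
   the infinite product being the limit of the partial products over n = 1,3,...,2N-1. *)
Definition C2_factor (x : R) (n : nat) : R :=
  let h := INR n / 2 in
  Rpower ((1 - x / h) / (1 + x / h)) h * exp (2 * x).

Definition C2 (x : R) : R :=
  real (Lim_seq (fun N => prod_1_to (fun m => C2_factor x (2 * m - 1)%nat) N)).

From Stdlib Require Import Reals Lra Lia.
From Coquelicot Require Import Coquelicot.
Open Scope R_scope.

(* Write c = (1 + x)/2, so that G(1/2 - x/2) = G(1 - c) and G(3/2 + x/2) = G(1 + c).
   Taking logarithms, the k-th factor of the product defining C_2(x/2) equals the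
   quotient of the k-th Weierstrass factors of G(1 - c) and G(1 + c), times the
   exponential of a telescoping term, of -1, of -ln(k - 1/2) and of
   -1/2 ln(1 - x^2/(2k - 1)^2).  Summed up to N, the last terms give the Euler product
   cos(pi x/2) = prod_k (1 - x^2/(2k - 1)^2), obtained by squeezing between Wallis
   integrals int_0^(pi/2) cos(bt) cos^n t dt.  The sum of ln(k - 1/2) is expressed
   through ln N! and ln (2N)!, so only the convergence of the Stirling remainder
   ln N! - (N + 1/2) ln N + N is needed, not its value.  The Euler constant and the
   powers of 2 pi coming from the two Barnes factors combine into the constants of
   the formula. *)

Fixpoint sum_1_to (f : nat -> R) (N : nat) : R :=
  match N with O => 0 | S n => sum_1_to f n + f (S n) end.

Lemma prod_1_to_exp_sum_ln (f : nat -> R) (N : nat) :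
  (forall k, (1 <= k)%nat -> 0 < f k) ->
  prod_1_to f N = exp (sum_1_to (fun k => ln (f k)) N).
Proof.
  intros Hf; induction N as [|N IH]; simpl.
  - now rewrite exp_0.
  - rewrite IH, exp_plus, exp_ln; [reflexivity | apply Hf; lia].
Qed.

Lemma sum_1_to_ext (f g : nat -> R) (N : nat) :
  (forall k, (1 <= k)%nat -> f k = g k) -> sum_1_to f N = sum_1_to g N.
Proof. intros H; induction N; simpl; [reflexivity | rewrite IHN, H; [reflexivity | lia]]. Qed.

Lemma sum_1_to_plus (f g : nat -> R) (N : nat) :
  sum_1_to (fun k => f k + g k) N = sum_1_to f N + sum_1_to g N.
Proof. induction N; simpl; [ring | rewrite IHN; ring]. Qed.

Lemma sum_1_to_minus (f g : nat -> R) (N : nat) :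
  sum_1_to (fun k => f k - g k) N = sum_1_to f N - sum_1_to g N.
Proof. induction N; simpl; [ring | rewrite IHN; ring]. Qed.

Lemma sum_1_to_scal_l (c : R) (f : nat -> R) (N : nat) :
  sum_1_to (fun k => c * f k) N = c * sum_1_to f N.
Proof. induction N; simpl; [ring | rewrite IHN; ring]. Qed.

Lemma sum_1_to_const (c : R) (N : nat) : sum_1_to (fun _ => c) N = c * INR N.
Proof. induction N; simpl sum_1_to; [simpl; ring | rewrite IHN, S_INR; ring]. Qed.

Lemma sum_1_to_telescope (a : nat -> R) (N : nat) :
  sum_1_to (fun k => a k - a (pred k)) N = a N - a O.
Proof. induction N; simpl; [ring | rewrite IHN; ring]. Qed.

Lemma sum_1_to_succ_sum_n (f : nat -> R) (N : nat) :
  sum_1_to f (S N) = sum_n (fun k => f (S k)) N.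
Proof.
  induction N as [|N IH].
  - rewrite sum_O. simpl. ring.
  - change (sum_1_to f (S (S N))) with (sum_1_to f (S N) + f (S (S N))).
    now rewrite IH, sum_Sn.
Qed.

Lemma is_lim_seq_inv_INR_S : is_lim_seq (fun n => / INR (S n)) 0.
Proof.
  apply is_lim_seq_incr_1 with (u := fun n => / INR n).
  exact (is_lim_seq_inv _ _ is_lim_seq_INR ltac:(discriminate)).
Qed.

Lemma is_series_inv_mul_succ : is_series (fun n => / (INR (S n) * INR (S (S n)))) 1.
Proof.
  change (is_lim_seq (sum_n (fun n => / (INR (S n) * INR (S (S n))))) 1).
  apply (is_lim_seq_ext (fun n => 1 - / INR (S (S n)))).
  - intros n; induction n as [|n IH].
    + rewrite sum_O. simpl. field.
    + rewrite sum_Sn, <- IH. unfold plus; cbn -[INR].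
      rewrite ?S_INR. pose proof (pos_INR n). field. lra.
  - replace (Finite 1) with (Finite (1 - 0)) by (f_equal; ring).
    apply is_lim_seq_minus'; [apply is_lim_seq_const |].
    exact (proj1 (is_lim_seq_incr_1 _ _) is_lim_seq_inv_INR_S).
Qed.

(* Comparison with the telescoping series [1/(k(k+1))]. *)
Lemma sum_1_to_cvg_of_inv_sq_bound (t : nat -> R) (M : R) :
  (forall k, (2 <= k)%nat -> Rabs (t k) <= M / INR k ^ 2) ->
  exists l : R, is_lim_seq (sum_1_to t) l.
Proof.
  intros Ht.
  assert (HM : 0 <= M).
  { specialize (Ht 2%nat (le_n _)). pose proof (Rabs_pos (t 2%nat)). simpl in Ht. lra. }
  assert (Hex : ex_series (fun n => t (S (S n)))).
  { apply (@ex_series_le R_AbsRing R_CompleteNormedModule _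
             (fun n => scal M (/ (INR (S n) * INR (S (S n)))))).
    - intros n. change (norm (t (S (S n)))) with (Rabs (t (S (S n)))).
      eapply Rle_trans; [apply Ht; lia |].
      change (scal M ?y) with (M * y).
      rewrite !S_INR. pose proof (pos_INR n).
      unfold Rdiv. apply Rmult_le_compat_l; [exact HM |].
      apply Rinv_le_contravar; nra.
    - apply (@ex_series_scal_l R_AbsRing R_NormedModule). eexists. apply is_series_inv_mul_succ. }
  apply (ex_series_incr_1 (fun n => t (S n))) in Hex as [l Hl].
  exists l. apply is_lim_seq_incr_1.
  apply (is_lim_seq_ext (sum_n (fun k => t (S k)))); [| exact Hl].
  intros n; now rewrite sum_1_to_succ_sum_n.
Qed.

Lemma is_lim_seq_minus_double_subseq (u : nat -> R) (l : R) :
  is_lim_seq u l -> is_lim_seq (fun n => u (2 * n + 1)%nat - u n) 0.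
Proof.
  intros Hu.
  assert (Hsub : is_lim_seq (fun n => u (2 * n + 1)%nat) l).
  { apply (is_lim_seq_subseq u l (fun n => (2 * n + 1)%nat)); [| exact Hu].
    intros P [N HN]. exists N. intros n Hn. apply HN. lia. }
  replace (Finite 0) with (Finite (l - l)) by (f_equal; ring).
  now apply is_lim_seq_minus'.
Qed.

Lemma Lim_seq_prod_1_to (f : nat -> R) (l : R) :
  (forall k, (1 <= k)%nat -> 0 < f k) ->
  is_lim_seq (sum_1_to (fun k => ln (f k))) l ->
  Lim_seq (prod_1_to f) = Finite (exp l).
Proof.
  intros Hf Hl. apply is_lim_seq_unique.
  apply (is_lim_seq_ext (fun N => exp (sum_1_to (fun k => ln (f k)) N))).
  - intros N. symmetry. now apply prod_1_to_exp_sum_ln.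
  - apply is_lim_seq_continuous; [| exact Hl].
    apply continuity_pt_filterlim, continuous_exp.
Qed.

Lemma ln_1p_le (u : R) : -1 < u -> ln (1 + u) <= u.
Proof.
  intros Hu. pose proof (exp_ineq1_le (ln (1 + u))) as H.
  rewrite exp_ln in H by lra. lra.
Qed.

Lemma ln_1p_ge (u : R) : -1 < u -> u / (1 + u) <= ln (1 + u).
Proof.
  intros Hu. pose proof (exp_ineq1_le (ln (/ (1 + u)))) as H.
  rewrite exp_ln, ln_Rinv in H by (try apply Rinv_0_lt_compat; lra).
  replace (u / (1 + u)) with (1 - / (1 + u)) by (field; lra). lra.
Qed.

(* Mean value theorem applied to [t |-> ln(1+t) - t + t^2/2], whose derivative is [t^2/(1+t)]. *)
Lemma ln_1p_taylor_bound (u : R) : Rabs u <= 1/2 ->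
  Rabs (ln (1 + u) - u + u ^ 2 / 2) <= 2 * Rabs u ^ 3.
Proof.
  intros Hu.
  destruct (MVT_abs (fun t => ln (1 + t) - t + t ^ 2 / 2) (fun t => / (1 + t) - 1 + t) 0 u)
    as [c [Hc Hcu]].
  { intros c Hc. apply is_derive_Reals.
    assert (Hc' : -(1/2) <= c <= 1/2).
    { apply Rabs_le_between in Hu. unfold Rmin, Rmax in Hc.
      destruct (Rle_dec 0 u); lra. }
    auto_derive; [lra | field; lra]. }
  replace (ln (1 + 0) - 0 + 0 ^ 2 / 2) with 0 in Hc by (rewrite Rplus_0_r, ln_1; field).
  rewrite !Rminus_0_r in Hc. rewrite Hc.
  assert (Hcu' : Rabs c <= Rabs u).
  { unfold Rmin, Rmax in Hcu. destruct (Rle_dec 0 u);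
      [rewrite (Rabs_pos_eq u), Rabs_pos_eq | rewrite (Rabs_left u), Rabs_left1]; lra. }
  assert (Hc2 : -(1/2) <= c <= 1/2) by (apply Rabs_le_between; lra).
  replace (/ (1 + c) - 1 + c) with (c ^ 2 / (1 + c)) by (field; lra).
  rewrite Rabs_div, (Rabs_pos_eq (1 + c)), <- RPow_abs by lra.
  pose proof (Rabs_pos c).
  assert (Rabs c ^ 2 / (1 + c) <= 2 * Rabs u ^ 2).
  { apply Rmult_le_reg_r with (1 + c); [lra |].
    unfold Rdiv. rewrite Rmult_assoc, Rinv_l, Rmult_1_r by lra. nra. }
  simpl in *. nra.
Qed.

Lemma is_lim_seq_mul_ln_shift (c : R) : 0 <= c ->
  is_lim_seq (fun n => INR (S n) * (ln (INR (S n) + c) - ln (INR (S n)))) c.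
Proof.
  intros Hc.
  apply is_lim_seq_le_le with (u := fun n => c - c * c * / INR (S n)) (w := fun _ => c).
  - intros n. set (y := INR (S n)).
    assert (Hy : 1 <= y) by (unfold y; rewrite S_INR; pose proof (pos_INR n); lra).
    replace (ln (y + c) - ln y) with (ln (1 + c / y))
      by (rewrite <- ln_div by lra; f_equal; field; lra).
    assert (Hcy : 0 <= c / y) by (apply Rdiv_le_0_compat; lra).
    pose proof (ln_1p_le (c / y) ltac:(lra)).
    pose proof (ln_1p_ge (c / y) ltac:(lra)).
    split.
    + apply Rle_trans with (y * (c / y / (1 + c / y))).
      * replace (y * (c / y / (1 + c / y))) with (c - c * c / (y + c)) by (field; lra).
        assert (/ (y + c) <= / y) by (apply Rinv_le_contravar; lra).
        unfold Rdiv. nra.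
      * apply Rmult_le_compat_l; lra.
    + replace c with (y * (c / y)) at 2 by (field; lra). apply Rmult_le_compat_l; lra.
  - replace (Finite c) with (Finite (c - c * c * 0)) by (f_equal; ring).
    apply is_lim_seq_minus'; [apply is_lim_seq_const |].
    apply is_lim_seq_mult'; [apply is_lim_seq_const | apply is_lim_seq_inv_INR_S].
  - apply is_lim_seq_const.
Qed.

(** * The Barnes G-function *)

Lemma one_plus_div_pos (w y : R) : -1 < w -> 1 <= y -> 0 < 1 + w / y.
Proof.
  intros Hw Hy. apply Rmult_lt_reg_r with y; [lra |].
  unfold Rdiv. rewrite Rmult_plus_distr_r, Rmult_assoc, Rinv_l by lra. nra.
Qed.

Lemma barnes_factor_pos (w : R) (k : nat) : -1 < w -> (1 <= k)%nat -> 0 < barnes_factor w k.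
Proof.
  intros Hw Hk. apply Rmult_lt_0_compat; [| apply exp_pos].
  apply pow_lt, one_plus_div_pos; [exact Hw | apply (le_INR 1); lia].
Qed.

Lemma ln_barnes_factor (w : R) (k : nat) : -1 < w -> (1 <= k)%nat ->
  ln (barnes_factor w k) = INR k * ln (1 + w / INR k) + (- w + w ^ 2 / (2 * INR k)).
Proof.
  intros Hw Hk.
  pose proof (one_plus_div_pos w (INR k) Hw ltac:(apply (le_INR 1); lia)).
  unfold barnes_factor. rewrite ln_mult, ln_pow, ln_exp; try lra.
  - apply pow_lt; lra.
  - apply exp_pos.
Qed.

(* [k ln(1 + w/k) - w + w^2/(2k) = O(1/k^2)]. *)
Lemma ln_barnes_factor_sum_cvg (w : R) : -1 < w < 1 ->
  exists p : R, is_lim_seq (sum_1_to (fun k => ln (barnes_factor w k))) p.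
Proof.
  intros Hw. apply (sum_1_to_cvg_of_inv_sq_bound _ 2). intros k Hk.
  assert (HK : 2 <= INR k) by (apply (le_INR 2); lia).
  assert (Hw1 : Rabs w < 1) by (apply Rabs_def1; lra).
  rewrite ln_barnes_factor by (lra || lia).
  set (u := w / INR k).
  assert (Hu : Rabs u = Rabs w / INR k) by (unfold u; rewrite Rabs_div, (Rabs_pos_eq (INR k)); lra).
  assert (Hu2 : Rabs u <= 1/2).
  { rewrite Hu. apply Rmult_le_reg_r with (INR k); [lra |].
    unfold Rdiv. rewrite Rmult_assoc, Rinv_l by lra. lra. }
  replace (INR k * ln (1 + u) + (- w + w ^ 2 / (2 * INR k)))
    with (INR k * (ln (1 + u) - u + u ^ 2 / 2)) by (unfold u; field; lra).
  rewrite Rabs_mult, Rabs_pos_eq by lra.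
  eapply Rle_trans; [apply Rmult_le_compat_l; [lra | exact (ln_1p_taylor_bound u Hu2)] |].
  rewrite Hu. pose proof (Rabs_pos w).
  assert (Rabs w ^ 3 <= 1) by (replace 1 with (1 ^ 3) by ring; apply pow_incr; lra).
  replace (INR k * (2 * (Rabs w / INR k) ^ 3)) with (2 * Rabs w ^ 3 / INR k ^ 2) by (field; lra).
  unfold Rdiv. apply Rmult_le_compat_r; [apply Rlt_le, Rinv_0_lt_compat, pow_lt |]; lra.
Qed.

Lemma BarnesG_exp (w p : R) : -1 < w ->
  is_lim_seq (sum_1_to (fun k => ln (barnes_factor w k))) p ->
  BarnesG (1 + w) = exp (w / 2 * ln (2 * PI) - (w + (1 + euler_gamma) * w ^ 2) / 2 + p).
Proof.
  intros Hw Hp. unfold BarnesG. replace (1 + w - 1) with w by ring.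
  rewrite (Lim_seq_prod_1_to _ p); [| intros k Hk; now apply barnes_factor_pos | exact Hp].
  simpl real. unfold Rpower. rewrite <- !exp_plus. f_equal. field.
Qed.
(** * Euler's product for the cosine *)

Definition wallis_integrand (n : nat) (b t : R) : R := cos (b * t) * cos t ^ n.

Definition wallis (n : nat) (b : R) : R := RInt (wallis_integrand n b) 0 (PI / 2).

Lemma wallis_integrand_continuous (n : nat) (b t : R) : continuous (wallis_integrand n b) t.
Proof. apply (@ex_derive_continuous R_AbsRing R_NormedModule). unfold wallis_integrand. auto_derive. trivial. Qed.

Lemma wallis_correct (n : nat) (b : R) : is_RInt (wallis_integrand n b) 0 (PI / 2) (wallis n b).
Proof.
  apply (@RInt_correct R_CompleteNormedModule), (@ex_RInt_continuous R_CompleteNormedModule).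
  intros; apply wallis_integrand_continuous.
Qed.

Lemma is_RInt_lin_comb (f1 f2 : R -> R) (a b A B I1 I2 : R) :
  is_RInt f1 a b I1 -> is_RInt f2 a b I2 ->
  is_RInt (fun t => A * f1 t - B * f2 t) a b (A * I1 - B * I2).
Proof.
  intros H1 H2.
  apply (is_RInt_minus (V := R_NormedModule)
           (fun t => scal A (f1 t)) (fun t => scal B (f2 t)) a b (scal A I1) (scal B I2));
    now apply (@is_RInt_scal R_NormedModule).
Qed.

Lemma RInt_wallis_lin_comb (n1 n2 : nat) (b1 b2 A B : R) :
  RInt (fun t => A * wallis_integrand n1 b1 t - B * wallis_integrand n2 b2 t) 0 (PI / 2)
  = A * wallis n1 b1 - B * wallis n2 b2.
Proof. apply (@is_RInt_unique R_CompleteNormedModule), is_RInt_lin_comb; apply wallis_correct. Qed.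

Lemma ex_RInt_wallis_lin_comb (n1 n2 : nat) (b1 b2 A B : R) :
  ex_RInt (fun t => A * wallis_integrand n1 b1 t - B * wallis_integrand n2 b2 t) 0 (PI / 2).
Proof. eexists. apply is_RInt_lin_comb; apply wallis_correct. Qed.

(* The primitive vanishes at both [0] and [PI/2]. *)
Lemma wallis_primitive_derive (m : nat) (b t : R) : is_derive
  (fun t => cos t ^ S m * (INR (S (S m)) * sin t * cos (b * t) - b * cos t * sin (b * t))) t
  ((INR (S (S m)) ^ 2 - b ^ 2) * wallis_integrand (S (S m)) b t
   - INR (S (S m)) * INR (S m) * wallis_integrand m b t).
Proof.
  auto_derive; [trivial |]. unfold wallis_integrand.
  replace (match m with 0%nat => 1 | S _ => INR m + 1 end) with (INR m + 1)
    by (destruct m; simpl; ring).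
  rewrite !S_INR.
  assert (Hsin : sin t ^ 2 = 1 - cos t ^ 2)
    by (pose proof (sin2_cos2 t); unfold Rsqr in *; simpl; lra).
  simpl pow. ring_simplify. rewrite Hsin. ring.
Qed.

Lemma wallis_rec (m : nat) (b : R) :
  (INR (S (S m)) ^ 2 - b ^ 2) * wallis (S (S m)) b = INR (S (S m)) * INR (S m) * wallis m b.
Proof.
  pose proof (@is_RInt_derive R_CompleteNormedModule _ _ 0 (PI / 2)
                (fun t _ => wallis_primitive_derive m b t)) as H.
  cbv beta in H.
  match type of H with _ -> is_RInt _ _ _ ?v =>
    replace v with 0 in H
      by (rewrite cos_PI2, pow_i, Rmult_0_r, !sin_0 by lia; unfold minus, plus, opp; simpl; ring)
  end.
  apply (@is_RInt_unique R_CompleteNormedModule) in H.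
  - rewrite RInt_wallis_lin_comb in H. lra.
  - intros t _. apply (@ex_derive_continuous R_AbsRing R_NormedModule).
    unfold wallis_integrand. auto_derive. trivial.
Qed.

Lemma wallis_1 (b : R) : (1 - b ^ 2) * wallis 1 b = cos (b * (PI / 2)).
Proof.
  pose proof (@is_RInt_derive R_CompleteNormedModule
                (fun t => sin t * cos (b * t) - b * cos t * sin (b * t))
                (fun t => (1 - b ^ 2) * wallis_integrand 1 b t - 0 * wallis_integrand 1 b t)
                0 (PI / 2)) as H.
  cbv beta in H.
  match type of H with _ -> _ -> is_RInt _ _ _ ?v =>
    replace v with (cos (b * (PI / 2))) in H
      by (rewrite cos_PI2, sin_PI2, Rmult_0_r, !sin_0; unfold minus, plus, opp; simpl; ring)
  end.
  apply (@is_RInt_unique R_CompleteNormedModule) in H.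
  - rewrite RInt_wallis_lin_comb in H. lra.
  - intros t _. unfold wallis_integrand. auto_derive; [trivial | ring].
  - intros t _. apply (@ex_derive_continuous R_AbsRing R_NormedModule).
    unfold wallis_integrand. auto_derive. trivial.
Qed.

Lemma wallis_1_0 : wallis 1 0 = 1.
Proof. pose proof (wallis_1 0) as H. rewrite Rmult_0_l, cos_0 in H. lra. Qed.

Lemma wallis_0_rec (m : nat) : wallis (S (S m)) 0 = INR (S m) / INR (S (S m)) * wallis m 0.
Proof.
  pose proof (wallis_rec m 0) as H.
  assert (0 < INR (S (S m))) by (apply lt_0_INR; lia).
  apply Rmult_eq_reg_l with (INR (S (S m)) ^ 2); [| apply pow_nonzero; lra].
  replace (INR (S (S m)) ^ 2) with (INR (S (S m)) ^ 2 - 0 ^ 2) at 1 by ring.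
  rewrite H. field. lra.
Qed.

Lemma wallis_0_odd_pos (m : nat) : 0 < wallis (2 * m + 1) 0.
Proof.
  induction m as [|m IH].
  - simpl. rewrite wallis_1_0. lra.
  - replace (2 * S m + 1)%nat with (S (S (2 * m + 1))) by lia.
    rewrite wallis_0_rec. apply Rmult_lt_0_compat; [| exact IH].
    apply Rdiv_lt_0_compat; apply lt_0_INR; lia.
Qed.

(* On [0, PI/2] and for [0 <= b <= 1]: [cos t ^ 2 <= cos t <= cos (b t) <= 1]. *)
Lemma wallis_gap (n : nat) (b : R) : 0 <= b <= 1 ->
  0 <= wallis n 0 - wallis n b <= wallis n 0 - wallis (S (S n)) 0.
Proof.
  intros Hb.
  assert (Hpt : forall t, 0 < t < PI / 2 ->
     0 <= 1 * wallis_integrand n 0 t - 1 * wallis_integrand n b t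
       <= 1 * wallis_integrand n 0 t - 1 * wallis_integrand (S (S n)) 0 t).
  { intros t Ht. unfold wallis_integrand. rewrite !Rmult_0_l, cos_0.
    assert (Hc : 0 <= cos t) by (apply cos_ge_0; lra).
    assert (Hc1 : cos t <= 1) by apply COS_bound.
    assert (Hcn : 0 <= cos t ^ n) by (apply pow_le; lra).
    assert (Hbt : cos t <= cos (b * t)).
    { pose proof PI_RGT_0.
      destruct (Rle_lt_or_eq_dec (b * t) t) as [E | E]; [nra | | rewrite E; lra].
      apply Rlt_le, cos_decreasing_1; nra. }
    assert (Hbt1 : cos (b * t) <= 1) by apply COS_bound.
    simpl pow. split; [nra |].
    assert (cos t ^ n * (1 - cos (b * t)) <= cos t ^ n * (1 - cos t * cos t))
      by (apply Rmult_le_compat_l; nra).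
    lra. }
  pose proof PI_RGT_0.
  rewrite <- (Rmult_1_l (wallis n 0)), <- (Rmult_1_l (wallis n b)),
    <- (Rmult_1_l (wallis (S (S n)) 0)), <- !RInt_wallis_lin_comb.
  split.
  - apply Rle_trans with (RInt (fun _ => 0) 0 (PI / 2)).
    { rewrite RInt_const. apply Req_le. symmetry. apply Rmult_0_r. }
    apply RInt_le; [lra | apply (@ex_RInt_const R_CompleteNormedModule)
                   | apply ex_RInt_wallis_lin_comb | intros; apply Hpt; auto].
  - apply RInt_le; [lra | apply ex_RInt_wallis_lin_comb | apply ex_RInt_wallis_lin_comb
                   | intros; apply Hpt; auto].
Qed.

Definition cos_partial_prod (b : R) (m : nat) : R :=
  prod_1_to (fun k => 1 - b ^ 2 / (2 * INR k - 1) ^ 2) m.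

Lemma cos_partial_prod_wallis (m : nat) (b : R) : 0 <= b < 1 ->
  cos (b * (PI / 2)) * wallis (2 * m + 1) 0 = cos_partial_prod b (S m) * wallis (2 * m + 1) b.
Proof.
  intros Hb. induction m as [|m IH].
  - simpl. rewrite wallis_1_0, <- wallis_1. unfold cos_partial_prod; simpl. field.
  - replace (2 * S m + 1)%nat with (S (S (2 * m + 1))) by lia.
    rewrite wallis_0_rec. pose proof (wallis_rec (2 * m + 1) b) as HR.
    unfold cos_partial_prod in *.
    change (prod_1_to ?f (S (S m))) with (prod_1_to f (S m) * f (S (S m))). cbv beta.
    replace (2 * INR (S (S m)) - 1) with (INR (S (S (2 * m + 1))))
      by (rewrite !S_INR, plus_INR, mult_INR; simpl; ring).
    replace (INR (S (2 * m + 1))) with (INR (S (S (2 * m + 1))) - 1) in * by (rewrite (S_INR (S _)); ring).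
    set (N := INR (S (S (2 * m + 1)))) in *.
    assert (HN : 3 <= N) by (unfold N; rewrite !S_INR, plus_INR, mult_INR; pose proof (pos_INR m); simpl; lra).
    assert (HJ : wallis (2 * m + 1) b = (N ^ 2 - b ^ 2) * wallis (S (S (2 * m + 1))) b / (N * (N - 1)))
      by (rewrite HR; field; lra).
    rewrite Rmult_comm, Rmult_assoc, (Rmult_comm (wallis _ 0)), IH, HJ.
    field. lra.
Qed.

Lemma wallis_odd_bounds (m : nat) (b : R) : 0 <= b <= 1 ->
  0 < wallis (2 * m + 1) b /\
  wallis (2 * m + 1) b <= wallis (2 * m + 1) 0 <= (1 + / INR (S m)) * wallis (2 * m + 1) b.
Proof.
  intros Hb.
  pose proof (wallis_0_odd_pos m) as H0.
  pose proof (wallis_gap (2 * m + 1) b Hb) as Hgap. rewrite wallis_0_rec in Hgap.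
  replace (INR (S (2 * m + 1))) with (2 * INR m + 2) in Hgap
    by (rewrite S_INR, plus_INR, mult_INR; simpl; ring).
  replace (INR (S (S (2 * m + 1)))) with (2 * INR m + 3) in Hgap
    by (rewrite !S_INR, plus_INR, mult_INR; simpl; ring).
  rewrite S_INR. pose proof (pos_INR m).
  set (J0 := wallis (2 * m + 1) 0) in *. set (Jb := wallis (2 * m + 1) b) in *.
  assert (Hlow : (2 * INR m + 2) * J0 <= (2 * INR m + 3) * Jb).
  { destruct Hgap as [_ Hgap].
    replace (J0 - (2 * INR m + 2) / (2 * INR m + 3) * J0) with (J0 / (2 * INR m + 3)) in Hgap
      by (field; lra).
    pose proof (Rmult_le_compat_l (2 * INR m + 3) _ _ ltac:(lra) Hgap) as H3.
    replace ((2 * INR m + 3) * (J0 / (2 * INR m + 3))) with J0 in H3 by (field; lra).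
    lra. }
  assert (HJb : 0 < Jb) by nra.
  repeat split; [exact HJb | lra |].
  replace ((1 + / (INR m + 1)) * Jb) with ((2 * INR m + 4) / (2 * INR m + 2) * Jb) by (field; lra).
  apply Rmult_le_reg_l with (2 * INR m + 2); [lra |].
  replace ((2 * INR m + 2) * ((2 * INR m + 4) / (2 * INR m + 2) * Jb)) with ((2 * INR m + 4) * Jb)
    by (field; lra).
  lra.
Qed.

Lemma is_lim_seq_cos_partial_prod (b : R) : 0 <= b < 1 ->
  is_lim_seq (cos_partial_prod b) (cos (b * (PI / 2))).
Proof.
  intros Hb. apply is_lim_seq_incr_1.
  set (C := cos (b * (PI / 2))).
  assert (HC : 0 <= C) by (unfold C; pose proof PI_RGT_0; apply cos_ge_0; nra).
  apply is_lim_seq_le_le with (u := fun _ => C) (w := fun m => C + C * / INR (S m)).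
  - intros m.
    destruct (wallis_odd_bounds m b ltac:(lra)) as [Hpos [Hle Hge]].
    pose proof (cos_partial_prod_wallis m b Hb) as Hprod. fold C in Hprod.
    replace (cos_partial_prod b (S m)) with (C * (wallis (2 * m + 1) 0 / wallis (2 * m + 1) b))
      by (unfold Rdiv; rewrite <- Rmult_assoc, Hprod; field; lra).
    assert (Hr1 : 1 <= wallis (2 * m + 1) 0 / wallis (2 * m + 1) b).
    { apply Rmult_le_reg_r with (wallis (2 * m + 1) b); [exact Hpos |].
      unfold Rdiv. rewrite Rmult_assoc, Rinv_l, Rmult_1_r by lra. lra. }
    assert (Hr2 : wallis (2 * m + 1) 0 / wallis (2 * m + 1) b <= 1 + / INR (S m)).
    { apply Rmult_le_reg_r with (wallis (2 * m + 1) b); [exact Hpos |].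
      unfold Rdiv. rewrite Rmult_assoc, Rinv_l, Rmult_1_r by lra. lra. }
    split; nra.
  - apply is_lim_seq_const.
  - replace (Finite C) with (Finite (C + C * 0)) by (f_equal; ring).
    apply is_lim_seq_plus'; [apply is_lim_seq_const |].
    apply is_lim_seq_mult'; [apply is_lim_seq_const | apply is_lim_seq_inv_INR_S].
Qed.

Lemma is_lim_seq_sum_ln_cos_factor (b : R) : 0 <= b < 1 ->
  is_lim_seq (sum_1_to (fun k => ln (1 - b ^ 2 / (2 * INR k - 1) ^ 2))) (ln (cos (b * (PI / 2)))).
Proof.
  intros Hb.
  assert (Hpos : forall k, (1 <= k)%nat -> 0 < 1 - b ^ 2 / (2 * INR k - 1) ^ 2).
  { intros k Hk. assert (HK : 1 <= INR k) by (apply (le_INR 1); lia).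
    assert (b ^ 2 / (2 * INR k - 1) ^ 2 < 1); [| lra].
    apply Rmult_lt_reg_r with ((2 * INR k - 1) ^ 2); [apply pow_lt; lra |].
    unfold Rdiv. rewrite Rmult_assoc, Rinv_l, Rmult_1_r, Rmult_1_l by (apply pow_nonzero; lra).
    simpl. nra. }
  apply (is_lim_seq_ext (fun N => ln (cos_partial_prod b N))).
  - intros N. unfold cos_partial_prod. rewrite prod_1_to_exp_sum_ln by exact Hpos. apply ln_exp.
  - apply is_lim_seq_continuous; [| now apply is_lim_seq_cos_partial_prod].
    apply continuity_pt_filterlim, continuous_ln.
    pose proof PI_RGT_0. apply cos_gt_0; nra.
Qed.

(** * The Stirling remainder *)

Definition sum_ln (N : nat) : R := sum_1_to (fun k => ln (INR k)) N.

Definition stirling_error (N : nat) : R := sum_ln N - (INR N + 1/2) * ln (INR N) + INR N.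

Lemma sum_ln_half_integers (N : nat) :
  sum_1_to (fun k => ln (INR k - 1/2)) N = sum_ln (2 * N) - sum_ln N - 2 * INR N * ln 2.
Proof.
  unfold sum_ln. induction N as [|N IH].
  - simpl. ring.
  - replace (2 * S N)%nat with (S (S (2 * N))) by lia.
    cbn [sum_1_to]. rewrite IH.
    rewrite !S_INR, mult_INR. replace (INR 2) with 2 by (simpl; ring). pose proof (pos_INR N).
    replace (INR N + 1 - 1/2) with ((2 * INR N + 1) / 2) by field.
    replace (INR N + 1) with ((2 * INR N + 2) / 2) at 1 by field.
    replace (2 * INR N + 1 + 1) with (2 * INR N + 2) by ring.
    rewrite !ln_div by lra. ring.
Qed.

Lemma stirling_error_succ (n : nat) :
  stirling_error (S (S n)) = stirling_error (S n) + (1 - (INR (S n) + 1/2) * ln (1 + / INR (S n))).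
Proof.
  unfold stirling_error, sum_ln. cbn [sum_1_to].
  assert (H1 : 1 <= INR (S n)) by (rewrite S_INR; pose proof (pos_INR n); lra).
  rewrite (S_INR (S n)).
  replace (1 + / INR (S n)) with ((INR (S n) + 1) / INR (S n)) by (field; lra).
  rewrite ln_div by lra. ring.
Qed.

(* With [u = 1/k]: [1 - (k + 1/2) ln(1 + u) = u^2/4 - (k + 1/2)(ln(1 + u) - u + u^2/2)]. *)
Lemma stirling_error_step_bound (k : nat) : (2 <= k)%nat ->
  Rabs (1 - (INR k + 1/2) * ln (1 + / INR k)) <= 4 / INR k ^ 2.
Proof.
  intros Hk. assert (HK : 2 <= INR k) by (apply (le_INR 2); lia).
  assert (Hk2 : 0 < INR k ^ 2) by (apply pow_lt; lra).
  set (u := / INR k).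
  assert (Hu : Rabs u = / INR k) by (apply Rabs_pos_eq, Rlt_le, Rinv_0_lt_compat; lra).
  assert (Hu2 : Rabs u <= 1/2).
  { rewrite Hu. apply Rmult_le_reg_r with (INR k); [lra |]. rewrite Rinv_l by lra. lra. }
  pose proof (ln_1p_taylor_bound u Hu2) as HT.
  set (e := ln (1 + u) - u + u ^ 2 / 2) in HT.
  replace (1 - (INR k + 1/2) * ln (1 + u)) with (/ (4 * INR k ^ 2) - (INR k + 1/2) * e)
    by (unfold e, u; field; lra).
  rewrite Hu in HT.
  assert (He : Rabs ((INR k + 1/2) * e) <= 3 / INR k ^ 2).
  { rewrite Rabs_mult, (Rabs_pos_eq (INR k + 1/2)) by lra.
    apply Rle_trans with ((INR k + 1/2) * (2 * / INR k ^ 3)).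
    - apply Rmult_le_compat_l; [lra |]. now rewrite pow_inv in HT.
    - apply Rmult_le_reg_r with (INR k ^ 3); [apply pow_lt; lra |].
      replace ((INR k + 1/2) * (2 * / INR k ^ 3) * INR k ^ 3) with (2 * INR k + 1) by (field; lra).
      replace (3 / INR k ^ 2 * INR k ^ 3) with (3 * INR k) by (field; lra). lra. }
  assert (H4 : 0 < / (4 * INR k ^ 2) <= 1 / INR k ^ 2).
  { split; [apply Rinv_0_lt_compat; lra |].
    unfold Rdiv. rewrite Rmult_1_l. apply Rinv_le_contravar; lra. }
  apply Rabs_le_between in He. apply Rabs_le. unfold Rdiv in *. lra.
Qed.

Lemma stirling_error_cvg : exists l : R, is_lim_seq (fun n => stirling_error (S n)) l.
Proof.
  destruct (sum_1_to_cvg_of_inv_sq_bound _ 4 stirling_error_step_bound) as [l Hl].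
  exists (1 + l).
  apply (is_lim_seq_ext (fun n => 1 + sum_1_to (fun k => 1 - (INR k + 1/2) * ln (1 + / INR k)) n)).
  - intros n. induction n as [|n IH].
    + unfold stirling_error, sum_ln. simpl. rewrite ln_1. ring.
    + rewrite stirling_error_succ, <- IH. cbn [sum_1_to]. ring.
  - apply is_lim_seq_plus'; [apply is_lim_seq_const | exact Hl].
Qed.

(** * The double cosine function *)

Lemma C2_factor_pos (a : R) (n : nat) : 0 < C2_factor a n.
Proof. apply Rmult_lt_0_compat; apply exp_pos. Qed.

Lemma ln_C2_factor_odd (x : R) (k : nat) : 0 <= x < 1 -> (1 <= k)%nat ->
  let c := 1/2 + x/2 in
  ln (C2_factor (x / 2) (2 * k - 1)) =
    ln (barnes_factor (- c) k) - ln (barnes_factor c k)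
    + (INR k * ln (INR k + c) - INR (pred k) * ln (INR (pred k) + c))
    - 1 - ln (INR k - 1/2) - 1/2 * ln (1 - x ^ 2 / (2 * INR k - 1) ^ 2).
Proof.
  intros Hx Hk c.
  assert (HK : 1 <= INR k) by (apply (le_INR 1); lia).
  replace (INR (pred k)) with (INR k - 1) by (destruct k; [lia | simpl pred; rewrite S_INR; ring]).
  set (a := x / 2). set (h := INR k - 1/2).
  rewrite !ln_barnes_factor by (unfold c; lra || lia).
  unfold C2_factor.
  replace (INR (2 * k - 1) / 2) with h by (rewrite minus_INR, mult_INR by lia; unfold h; simpl; field).
  rewrite ln_mult, ln_Rpower, ln_exp by (unfold Rpower; apply exp_pos).
  replace ((1 - a / h) / (1 + a / h)) with ((h - a) / (h + a)) by (unfold a, h; field; lra).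
  replace (1 + - c / INR k) with ((h - a) / INR k) by (unfold c, h, a; field; lra).
  replace (1 + c / INR k) with ((INR k + c) / INR k) by (field; lra).
  replace (INR k - 1 + c) with (h + a) by (unfold c, h, a; field).
  replace (1 - x ^ 2 / (2 * INR k - 1) ^ 2) with ((h - a) * (h + a) / (h * h))
    by (unfold h, a; field; lra).
  assert (0 < h - a) by (unfold h, a; lra).
  assert (0 < h + a) by (unfold h, a; lra).
  rewrite !ln_div, !ln_mult by (unfold c; nra).
  unfold c, a, h. field. lra.
Qed.

Lemma sum_ln_C2_factor (x : R) (n : nat) : 0 <= x < 1 ->
  let c := 1/2 + x/2 in
  sum_1_to (fun m => ln (C2_factor (x / 2) (2 * m - 1))) (S n) =
    sum_1_to (fun k => ln (barnes_factor (- c) k)) (S n)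
    - sum_1_to (fun k => ln (barnes_factor c k)) (S n)
    + INR (S n) * (ln (INR (S n) + c) - ln (INR (S n))) - 1/2 * ln 2
    - (stirling_error (S (2 * n + 1)) - stirling_error (S n))
    - 1/2 * sum_1_to (fun k => ln (1 - x ^ 2 / (2 * INR k - 1) ^ 2)) (S n).
Proof.
  intros Hx c.
  rewrite (sum_1_to_ext _ (fun k =>
    ((((ln (barnes_factor (- c) k) - ln (barnes_factor c k))
       + (INR k * ln (INR k + c) - INR (pred k) * ln (INR (pred k) + c)))
      - 1) - ln (INR k - 1/2)) - 1/2 * ln (1 - x ^ 2 / (2 * INR k - 1) ^ 2)))
    by (intros k Hk; now apply ln_C2_factor_odd).
  rewrite !sum_1_to_minus, sum_1_to_plus, sum_1_to_minus, sum_1_to_scal_l,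
    (sum_1_to_telescope (fun k => INR k * ln (INR k + c))), sum_1_to_const,
    sum_ln_half_integers.
  unfold stirling_error.
  replace (2 * S n)%nat with (S (2 * n + 1)) by lia.
  replace (INR (S (2 * n + 1))) with (2 * INR (S n)) by (rewrite !S_INR, plus_INR, mult_INR; simpl; ring).
  assert (0 < INR (S n)) by (apply lt_0_INR; lia).
  rewrite ln_mult by lra. change (INR 0) with 0. ring.
Qed.

Lemma is_lim_seq_sum_ln_C2_factor (x p1 p2 : R) : 0 <= x < 1 ->
  let c := 1/2 + x/2 in
  is_lim_seq (sum_1_to (fun k => ln (barnes_factor (- c) k))) p1 ->
  is_lim_seq (sum_1_to (fun k => ln (barnes_factor c k))) p2 ->
  is_lim_seq (sum_1_to (fun m => ln (C2_factor (x / 2) (2 * m - 1))))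
    (p1 - p2 + c - 1/2 * ln 2 - 1/2 * ln (cos (x * (PI / 2)))).
Proof.
  intros Hx c Hp1 Hp2.
  rewrite <- (Rminus_0_r (p1 - p2 + c - 1/2 * ln 2)).
  destruct stirling_error_cvg as [l Hl].
  apply is_lim_seq_incr_1.
  apply (is_lim_seq_ext _ _ _ (fun n => eq_sym (sum_ln_C2_factor x n Hx))).
  apply is_lim_seq_minus'; [apply is_lim_seq_minus'; [apply is_lim_seq_minus' |] |].
  - apply is_lim_seq_plus'; [apply is_lim_seq_minus' |].
    + now apply is_lim_seq_incr_1 in Hp1.
    + now apply is_lim_seq_incr_1 in Hp2.
    + apply is_lim_seq_mul_ln_shift. unfold c; lra.
  - apply is_lim_seq_const.
  - exact (is_lim_seq_minus_double_subseq _ _ Hl).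
  - apply is_lim_seq_mult'; [apply is_lim_seq_const |].
    apply (is_lim_seq_incr_1 (sum_1_to _)), is_lim_seq_sum_ln_cos_factor, Hx.
Qed.

Theorem mainTheorem18 (x : R) (hx : 0 <= x < 1) :
  ln (C2 (x / 2)) =
    x / 2 * ln (2 * PI) + ln (sqrt PI) - 1 / 2 * ln (cos (PI * x / 2))
    + ln (BarnesG (1 / 2 - x / 2) / BarnesG (3 / 2 + x / 2)).
Proof.
  pose proof PI_RGT_0.
  set (c := 1/2 + x/2).
  destruct (ln_barnes_factor_sum_cvg (- c)) as [p1 Hp1]; [unfold c; lra |].
  destruct (ln_barnes_factor_sum_cvg c) as [p2 Hp2]; [unfold c; lra |].
  assert (HC2 : C2 (x / 2) = exp (p1 - p2 + c - 1/2 * ln 2 - 1/2 * ln (cos (x * (PI / 2))))).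
  { unfold C2. change (fun N => prod_1_to ?f N) with (prod_1_to f).
    rewrite (Lim_seq_prod_1_to _ _ (fun m _ => C2_factor_pos _ _)
                          (is_lim_seq_sum_ln_C2_factor x p1 p2 hx Hp1 Hp2)).
    reflexivity. }
  replace (1 / 2 - x / 2) with (1 + - c) by (unfold c; field).
  replace (3 / 2 + x / 2) with (1 + c) by (unfold c; field).
  rewrite HC2, (BarnesG_exp (- c) p1), (BarnesG_exp c p2), ln_div, !ln_exp
    by (unfold c; lra || assumption || apply exp_pos).
  rewrite <- Rpower_sqrt, ln_Rpower, ln_mult by lra.
  replace (PI * x / 2) with (x * (PI / 2)) by field.
  unfold c. field.
Qed.
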